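(* Let $T$ be a tree with at least $3$ vertices. Then for every $v\in V(T)$, $f_{T,v}(v)+1\ge \max_{w\in V(T)} f_{T,w}(w)$.
   Context: For a tree $T$ rooted at $v$, the values $f_{T,v}(w)$, $w\in V(T)$, are defined recursively: if $w$ has no children (no descendants) in the rooted tree, $f_{T,v}(w)=0$; otherwise let $u_0,\dots,u_k$ be the children of $w$, let $T_i$ be the subtree consisting of $u_i$ and all its descendants, rooted at $u_i$, and order them so that $c_i:=f_{T_i,u_i}(u_i)$ satisfy $c_0\ge c_1\ge\cdots\ge c_k$; then $f_{T,v}(w)=\max_{0\le i\le k}(i+c_i)$. *)

From mathcomp Require Import all_boot.
Set Implicit Arguments. Unset Strict Implicit. Unset Printing Implicit Defensive.

(* A tree: a connected simple graph with no cycle (a cycle = a closed walk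
   with at least 3 pairwise distinct vertices). *)
Definition is_tree (T : finType) (e : rel T) : Prop :=
  [/\ symmetric e, irreflexive e,
      (forall x y : T, connect e x y) &
      (forall c : seq T, ucycle e c -> size c < 3)].

(* fval e n p w : the value f_{T,v}(w) for the tree rooted so that p is the
   parent of w (p = None when w is the root). The children of w are its
   neighbours other than its parent.  n is fuel (structural recursion);
   with n = #|T| it exceeds the depth of every rooted tree on T. *)
Fixpoint fval (T : finType) (e : rel T) (n : nat) (p : option T) (w : T) : nat :=
  match n with
  | 0 => 0
  | n'.+1 =>
    let cs := sort geq [seq fval e n' (Some w) u | u <- enum T & e w u && (Some u != p)] in
    \max_(i < size cs) (i + nth 0 cs i)
  end.

Definition f_root (T : finType) (e : rel T) (v : T) : nat := fval e #|T| None v.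

(* Write f_p(w) for the value at w when the tree is rooted so that p is the
   parent of w.  The rank maximum max_i (i + c_i) only depends on how many
   children have value at least a, for each a, so it is monotone under adding
   children, and adding one child of value c raises it to at most
   max(c, old value + 1).  Hence a child's value is at most its parent's, and
   for an edge xy, f_q(y) <= max(f_y(x), f_x(y) + 1) whatever the parent q of
   y.  With t = f(v), the pair of bounds f_x(y) <= t, f_y(x) <= t + 1 holds on
   the first edge of the path from v to w and propagates along it, giving
   f(w) <= t + 1 at its end. *)

From mathcomp Require Import all_boot zify.

Set Implicit Arguments. Unset Strict Implicit. Unset Printing Implicit Defensive.

Definition rankmax (cs : seq nat) : nat :=
  let ss := sort geq cs in \max_(i < size ss) (i + nth 0 ss i).

Lemma sorted_geq_count (ss : seq nat) a i : sorted geq ss -> i < size ss ->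
  (i < count (leq a) ss) = (a <= nth 0 ss i).
Proof.
elim: ss i => // x s IH i /= x_s.
have le_x : all (geq x) s := order_path_min (rev_trans leq_trans) x_s.
have {}IH := IH _ (path_sorted x_s).
case: (leqP a x) => [a_le_x | x_lt_a].
  by case: i => [|j] //= j_lt; rewrite add1n ltnS IH.
have cnt0 : count (leq a) s = 0.
  apply/eqP; rewrite -leqn0 leqNgt -has_count -all_predC.
  by apply: sub_all le_x => c /= c_le; rewrite -ltnNge (leq_ltn_trans c_le).
case: i => [|j] /= j_lt; first by rewrite cnt0; apply/esym/negbTE; rewrite -ltnNge.
by rewrite -IH // cnt0.
Qed.

Lemma rankmax_leqP t cs :
  rankmax cs <= t <-> (forall a, 0 < count (leq a) cs -> count (leq a) cs + a <= t.+1).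
Proof.
rewrite /rankmax; set ss := sort geq cs.
have cnt P : count P ss = count P cs := permP (permEl (perm_sort geq cs)) P.
have ss_sorted : sorted geq ss := sort_sorted (fun m n => leq_total n m) cs.
split=> [/bigmax_leqP le_t a | bound].
  rewrite -cnt => cnt_pos.
  have lt_size : (count (leq a) ss).-1 < size ss by have := count_size (leq a) ss; lia.
  have := sorted_geq_count a ss_sorted lt_size; rewrite ltn_predL cnt_pos => /esym.
  have := le_t (Ordinal lt_size) isT; rewrite /=; lia.
apply/bigmax_leqP => -[i lt_i] _ /=.
have := sorted_geq_count (nth 0 ss i) ss_sorted lt_i; rewrite leqnn.
have := bound (nth 0 ss i); rewrite -!cnt; lia.
Qed.

Lemma count_leq_rankmax cs a :
  0 < count (leq a) cs -> count (leq a) cs + a <= (rankmax cs).+1.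
Proof. exact: (proj1 (rankmax_leqP _ _) (leqnn _)). Qed.

Lemma rankmax_count_mono cs ds :
  (forall a, count (leq a) cs <= count (leq a) ds) -> rankmax cs <= rankmax ds.
Proof.
move=> le_cnt; apply/rankmax_leqP => a cnt_pos.
have := count_leq_rankmax (leq_trans cnt_pos (le_cnt a)); have := le_cnt a; lia.
Qed.

Lemma leq_rankmax c cs : c \in cs -> c <= rankmax cs.
Proof.
move=> c_in; have cnt_pos : 0 < count (leq c) cs.
  by rewrite -has_count; apply/hasP; exists c.
have := count_leq_rankmax cnt_pos; lia.
Qed.

Lemma rankmax_cons c cs : rankmax (c :: cs) <= maxn c (rankmax cs).+1.
Proof.
apply/rankmax_leqP => a /=; have := @count_leq_rankmax cs a.
case: (leqP a c); case: (posnP (count (leq a) cs)); lia.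
Qed.

Lemma count_leq_map_filter (T : Type) (f : T -> nat) (P : pred T) s a :
  count (leq a) [seq f u | u <- s & P u] = count (fun u => P u && (a <= f u)) s.
Proof. by rewrite count_map count_filter; apply: eq_count => u /=; rewrite andbC. Qed.

Section RankmaxEnum.
Variables (T : finType) (f : T -> nat).

Lemma rankmax_enum_subpred (P Q : pred T) : subpred P Q ->
  rankmax [seq f u | u <- enum T & P u] <= rankmax [seq f u | u <- enum T & Q u].
Proof.
move=> PQ; apply: rankmax_count_mono => a; rewrite !count_leq_map_filter.
by apply: sub_count => u /andP [/PQ -> ->].
Qed.

Lemma rankmax_enum_subpred1 (P Q : pred T) x : subpred P (predU (pred1 x) Q) ->
  rankmax [seq f u | u <- enum T & P u]
    <= maxn (f x) (rankmax [seq f u | u <- enum T & Q u]).+1.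
Proof.
move=> PxQ; apply: leq_trans (rankmax_cons _ _); apply: rankmax_count_mono => a.
rewrite /= !count_leq_map_filter.
case: (leqP a (f x)) => [_ | fx_lt_a]; last first.
  apply: sub_count => u /andP [/PxQ /orP [/eqP u_x | Qu] a_le]; last by rewrite Qu.
  by move: a_le; rewrite u_x leqNgt fx_lt_a.
rewrite add1n; set B := (fun u => Q u && (a <= f u)).
apply: (@leq_trans (count (predU (pred1 x) B) (enum T))).
  apply: sub_count => u /andP [/PxQ /orP [x_u | Qu] a_le]; apply/orP; first by left.
  by right; apply/andP.
have := count_predUI (pred1 x) B (enum T).
by rewrite count_uniq_mem ?enum_uniq // mem_enum inE add1n => <-; apply: leq_addr.
Qed.

End RankmaxEnum.

Section RootedTree.
Variables (T : finType) (e : rel T).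

Fixpoint nonbacktracking (p : option T) (y : T) (s : seq T) : bool :=
  if s is z :: s' then [&& Some z != p, e y z & nonbacktracking (Some y) z s'] else true.

Lemma nonbacktracking_cons p y z s :
  nonbacktracking p y (z :: s) = [&& Some z != p, e y z & nonbacktracking (Some y) z s].
Proof. by []. Qed.

Lemma fvalS n p w :
  fval e n.+1 p w = rankmax [seq fval e n (Some w) u | u <- enum T & e w u && (Some u != p)].
Proof. by []. Qed.

Lemma fval_fuel_stable n m p w :
  (forall s, nonbacktracking p w s -> size s < n) -> n <= m -> fval e m p w = fval e n p w.
Proof.
elim: n m p w => [|n IH] [|m] p w bound // le_nm; first by have := bound [::] isT.
rewrite !fvalS; congr rankmax; apply/eq_in_map => u.
rewrite mem_filter => /andP [/andP [wu up] _]; apply: IH => // s nb.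
by apply: (bound (u :: s)); rewrite /= up wu.
Qed.

Hypothesis tree : is_tree e.

Lemma tree_closing_edge x s : path e x s -> uniq (x :: s) -> e (last x s) x -> size s < 2.
Proof.
have [_ _ _ acyclic] := tree; move=> xs uxs sx.
by have := acyclic (x :: s); rewrite /ucycle /cycle rcons_path xs sx uxs; apply.
Qed.

Lemma nonbacktracking_path p y s : nonbacktracking p y s -> path e y s.
Proof. by elim: s p y => //= z s IH p y /and3P [_ -> /IH]. Qed.

Lemma nonbacktracking_uniq x y s :
  e x y -> nonbacktracking (Some x) y s -> uniq (x :: y :: s).
Proof.
have [_ irr _ _] := tree.
have edge_neq u v : e u v -> u != v by apply: contraTneq => ->; rewrite irr.
elim: s x y => [|z s IH] x y xy.
  by rewrite /= inE andbT edge_neq.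
rewrite nonbacktracking_cons => /and3P [zx yz nb]; have uyzs := IH _ _ yz nb.
have [xy' xz] : x != y /\ x != z by split; [exact: edge_neq | apply: contra zx => /eqP ->].
rewrite cons_uniq uyzs andbT !inE (negbTE xy') (negbTE xz) /=; apply/negP => x_s.
move: uyzs (nonbacktracking_path nb); case/splitPr: x_s => s1 s2.
rewrite -!cat_cons cat_uniq [has _ (_ :: _)]/= negb_or cat_path.
case/and3P=> uyzs1 /andP [x_notin _] _ /andP [zs1] /= /andP [s1x _].
suff: size (y :: z :: s1) < 2 by [].
apply: (tree_closing_edge (x := x)) => //; first by rewrite /= xy yz.
by rewrite cons_uniq x_notin.
Qed.

Definition f_rooted (p : option T) (w : T) : nat := fval e #|T| p w.

Lemma f_rootedE p w :
  f_rooted p w = rankmax [seq f_rooted (Some w) u | u <- enum T & e w u && (Some u != p)].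
Proof.
have card_gt0 : 0 < #|T| by apply/card_gt0P; exists w.
rewrite /f_rooted -(prednK card_gt0) fvalS prednK //.
congr rankmax; apply/eq_in_map => u.
rewrite mem_filter => /andP [/andP [wu _] _].
apply/esym/fval_fuel_stable => [s nb|]; last exact: leq_pred.
have := max_card (mem (w :: u :: s)).
rewrite (card_uniqP (nonbacktracking_uniq wu nb)) /=; lia.
Qed.

Lemma f_rooted_le_root p w : f_rooted p w <= f_rooted None w.
Proof. by rewrite !f_rootedE; apply: rankmax_enum_subpred => u /andP [-> _]. Qed.

Lemma f_rooted_child p w u :
  e w u -> Some u != p -> f_rooted (Some w) u <= f_rooted p w.
Proof.
move=> wu up; rewrite [f_rooted p w]f_rootedE; apply: leq_rankmax.
by apply: map_f; rewrite mem_filter wu up mem_enum.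
Qed.

Lemma f_rooted_reroot p w x : e w x ->
  f_rooted p w <= maxn (f_rooted (Some w) x) (f_rooted (Some x) w).+1.
Proof.
move=> wx; rewrite [f_rooted p w]f_rootedE [f_rooted (Some x) w]f_rootedE.
apply: rankmax_enum_subpred1 => u /andP [wu _] /=.
by case: (eqVneq u x) => //= ux; rewrite wu.
Qed.

Lemma f_rooted_across_edge t q x y : e x y ->
  f_rooted (Some x) y <= t -> f_rooted (Some y) x <= t.+1 -> f_rooted q y <= t.+1.
Proof.
have [sym _ _ _] := tree; move=> xy xy_le yx_le.
apply: leq_trans (f_rooted_reroot q (_ : e y x)) _; first by rewrite sym.
by rewrite geq_max yx_le ltnS xy_le.
Qed.

Lemma f_root_along_path t x y s : path e y s -> uniq (x :: y :: s) -> e x y ->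
  f_rooted (Some x) y <= t -> f_rooted (Some y) x <= t.+1 ->
  f_rooted None (last y s) <= t.+1.
Proof.
elim: s x y => [|z s IH] x y; first by move=> _ _; apply: f_rooted_across_edge.
move=> /andP [yz zs]; rewrite cons_uniq => /andP [x_notin uyzs] xy xy_le yx_le.
have zx : Some z != Some x.
  by apply: contra x_notin => /eqP [->]; rewrite !inE eqxx orbT.
apply: IH zs uyzs yz (leq_trans (f_rooted_child yz zx) xy_le) _.
exact: f_rooted_across_edge xy xy_le yx_le.
Qed.

End RootedTree.

Theorem proposition4p3 (T : finType) (e : rel T) :
  is_tree e -> 3 <= #|T| ->
  forall v : T, (\max_(w : T) f_root e w) <= f_root e v + 1.
Proof.
move=> tree _ v; rewrite addn1; apply/bigmax_leqP => w _.
have [_ _ connected _] := tree.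
have /connectP [p vp ->] := connected v w.
case: (shortenP vp) => -[|y s] /=; first by rewrite leqnSn.
case/andP=> vy ys uq _.
apply: (f_root_along_path tree ys uq vy).
- exact: (f_rooted_child tree vy (isT : Some y != None)).
- exact: leq_trans (f_rooted_le_root tree _ _) (leqnSn _).
Qed.
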